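(* Let $\Gamma$ be a countable discrete group, $\gamma_1\neq\gamma_2\in\Gamma$, $a,b\in\mathbb{C}\setminus\{0\}$, and $f=a\delta_{\gamma_1}+b\delta_{\gamma_2}\in\ell_2(\Gamma)$. If $|a|\neq|b|$, then $\{\lambda(\gamma)f:\gamma\in\Gamma\}$ is a Riesz basis for $\ell_2(\Gamma)$.
   Context: $\lambda$ is the left regular representation of $\Gamma$ on $\ell_2(\Gamma)$, $\lambda(\gamma)\delta_{\gamma'}=\delta_{\gamma\gamma'}$, where $\{\delta_\gamma\}$ is the canonical basis. *)

From HB Require Import structures.
From mathcomp Require Import all_boot all_order all_algebra.
From mathcomp Require Import complex.
From mathcomp Require Import all_classical all_reals all_analysis.
Set Implicit Arguments. Unset Strict Implicit. Unset Printing Implicit Defensive.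
Import Order.TTheory GRing.Theory Num.Theory.
Local Open Scope ring_scope.
Local Open Scope classical_set_scope.
Local Open Scope complex_scope.

Section L2.
Variables (R : realType) (G : groupType).

Definition sqmod (z : R[i]) : R := complex.Re z ^+ 2 + complex.Im z ^+ 2.

Definition in_l2 (x : G -> R[i]) : Prop := summable [set: G] (fun g => (sqmod (x g))%:E).

Definition l2norm2 (x : G -> R[i]) : R :=
  fine (\esum_(g in [set: G]) (sqmod (x g))%:E)%E.

Definition delta (g : G) : G -> R[i] := fun h => if h == g then 1 else 0.

(* left regular representation: (lambda g x)(h) = x (g^-1 h),
   so that lambda g (delta g') = delta (g g') *)
Definition lambda (g : G) (x : G -> R[i]) : G -> R[i] :=
  fun h => x (g^-1 * h)%g.

(* Riesz basis of l_2(G) indexed by G: the image of the canonical orthonormal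
   basis (delta_g) under a bounded linear bijection of l_2(G) onto itself. *)
Definition riesz_basis (e : G -> (G -> R[i])) : Prop :=
  exists T : (G -> R[i]) -> (G -> R[i]),
    [/\ (forall x, in_l2 x -> in_l2 (T x)),
        (forall (c : R[i]) x y, in_l2 x -> in_l2 y ->
            T (fun h => c * x h + y h) = (fun h => c * T x h + T y h)),
        (exists M : R, forall x, in_l2 x -> l2norm2 (T x) <= M * l2norm2 x),
        ((forall x y, in_l2 x -> in_l2 y -> T x = T y -> x = y) /\
         (forall y, in_l2 y -> exists2 x, in_l2 x & T x = y)) &
        (forall g, T (delta g) = e g)].

End L2.

(* The operator [T x = x * f] of right convolution by [f = a delta_g1 + b delta_g2],
   [(T x) h = a x (h g1^-1) + b x (h g2^-1)], commutes with [lambda] and maps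
   [delta g] to [lambda g f], so it suffices that [T] be a bounded bijection of
   [l_2(G)].  Boundedness holds because right translations are isometries.
   By symmetry let [|b| < |a|] and put [v := g1 g2^-1], [c := - b / a].
   Then [T x = 0] forces [|x k| = |c| |x (k v)|], hence
   [|x k|^2 <= |c|^(2n) ||x||^2] for all [n], so [x = 0]; and [T x = y] is
   solved by the Neumann series [x k = a^-1 \sum_n c^n y (k v^n g1)], whose
   norm is controlled by a weighted Cauchy-Schwarz inequality with weights
   [rho^n], [|c|^2 <= rho^2 < 1]. *)

From HB Require Import structures.
From mathcomp Require Import all_boot all_order all_algebra.
From mathcomp Require Import complex.
From mathcomp Require Import all_classical all_reals all_analysis.
From mathcomp Require Import ring lra.
From mathcomp Require finmap.
Set Implicit Arguments.
Unset Strict Implicit.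
Unset Printing Implicit Defensive.
Import Order.TTheory GRing.Theory Num.Theory.
Import numFieldNormedType.Exports.
Local Open Scope ring_scope.
Local Open Scope classical_set_scope.

Section ComplexModulus.
Variable R : realType.
Local Notation q := (@sqmod R).
Implicit Types x y z : R[i].
Import ComplexField.Normc.

Lemma ReD x y : complex.Re (x + y) = complex.Re x + complex.Re y.
Proof. by case: x; case: y. Qed.

Lemma ImD x y : complex.Im (x + y) = complex.Im x + complex.Im y.
Proof. by case: x; case: y. Qed.

Lemma ReM x y :
  complex.Re (x * y) = complex.Re x * complex.Re y - complex.Im x * complex.Im y.
Proof. by case: x; case: y. Qed.

Lemma Re_sum (I : Type) (r : seq I) (F : I -> R[i]) :
  complex.Re (\sum_(i <- r) F i) = \sum_(i <- r) complex.Re (F i).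
Proof. exact: (big_morph _ ReD (erefl : complex.Re 0 = 0)). Qed.

Lemma Im_sum (I : Type) (r : seq I) (F : I -> R[i]) :
  complex.Im (\sum_(i <- r) F i) = \sum_(i <- r) complex.Im (F i).
Proof. exact: (big_morph _ ImD (erefl : complex.Im 0 = 0)). Qed.

Lemma sqmodE z : q z = normc z ^+ 2.
Proof. by case: z => u v; rewrite /sqmod /= sqr_sqrtr // addr_ge0 ?sqr_ge0. Qed.

Lemma sqmod_ge0 z : 0 <= q z.
Proof. by rewrite sqmodE sqr_ge0. Qed.

Lemma sqmod_eq0 z : (q z == 0) = (z == 0).
Proof.
rewrite sqmodE sqrf_eq0; apply/eqP/eqP => [/eq0_normc //|->].
exact: normc0.
Qed.

Lemma sqmodM x y : q (x * y) = q x * q y.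
Proof. by rewrite !sqmodE normcM exprMn. Qed.

Lemma sqmodV z : q z^-1 = (q z)^-1.
Proof. by rewrite !sqmodE normcV exprVn. Qed.

Lemma sqmodX z n : q (z ^+ n) = q z ^+ n.
Proof.
elim: n => [|n IHn]; first by rewrite !expr0 sqmodE normc1 expr1n.
by rewrite !exprS sqmodM IHn.
Qed.

Lemma sqmodN z : q (- z) = q z.
Proof. by case: z => u v; rewrite /sqmod /= !sqrrN. Qed.

Lemma Re_sqr_le_sqmod z : complex.Re z ^+ 2 <= q z.
Proof. by rewrite lerDl sqr_ge0. Qed.

Lemma Im_sqr_le_sqmod z : complex.Im z ^+ 2 <= q z.
Proof. by rewrite lerDr sqr_ge0. Qed.

Lemma sqmodD_le x y (P p : R) : 0 < P -> 0 < p ->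
  q (x + y) <= (P + p) * (q x / P + q y / p).
Proof.
move=> P_gt0 p_gt0; rewrite /sqmod ReD ImD -subr_ge0.
case: x y => [x1 x2] [y1 y2] /=.
have -> : (P + p) * ((x1 ^+ 2 + x2 ^+ 2) / P + (y1 ^+ 2 + y2 ^+ 2) / p)
    - ((x1 + y1) ^+ 2 + (x2 + y2) ^+ 2)
  = ((p * x1 - P * y1) ^+ 2 + (p * x2 - P * y2) ^+ 2) / (P * p).
  by field; rewrite ?gt_eqF.
by rewrite divr_ge0 ?addr_ge0 ?sqr_ge0 ?mulr_ge0 ?ltW.
Qed.

Lemma sqmod_sum_le (z : nat -> R[i]) (p : nat -> R) N : (forall n, 0 < p n) ->
  q (\sum_(0 <= n < N) z n)
    <= (\sum_(0 <= n < N) p n) * \sum_(0 <= n < N) q (z n) / p n.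
Proof.
move=> p_gt0; elim: N => [|[|N] IHN].
- by rewrite !big_geq // sqmodE normc0 expr0n mul0r.
- by rewrite !big_nat1 mulrC divfK // gt_eqF.
rewrite !(big_nat_recr N.+1) //=.
have P_gt0 : 0 < \sum_(0 <= n < N.+1) p n.
  rewrite big_nat_recl // (lt_le_trans (p_gt0 0%N)) // lerDl.
  by rewrite sumr_ge0 // => n _; exact: ltW.
apply: le_trans (sqmodD_le _ _ P_gt0 (p_gt0 N.+1)) _.
apply: ler_wpM2l; first by rewrite addr_ge0 ?ltW.
by rewrite lerD2r ler_pdivrMr // mulrC.
Qed.

End ComplexModulus.

Section ComplexSeries.
Local Open Scope complex_scope.
Variable R : realType.
Local Notation q := (@sqmod R).
Implicit Types (u : nat -> R[i]) (f : R ^nat).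

(* [R[i]] is not a complete normed space over [R] in the library, so complex
   series are summed through their real and imaginary parts. *)
Definition cseries_cvg u : Prop :=
  cvgn (series (fun n => complex.Re (u n))) /\
  cvgn (series (fun n => complex.Im (u n))).

Definition cseries_lim u : R[i] :=
  limn (series (fun n => complex.Re (u n))) +i*
  limn (series (fun n => complex.Im (u n))).

Lemma cseries_cvg_geometric u (M rho : R) : 0 <= M -> 0 <= rho < 1 ->
  (forall n, q (u n) <= (M * rho ^+ n) ^+ 2) -> cseries_cvg u.
Proof.
move=> M_ge0 /andP[rho_ge0 rho_lt1] u_le.
have geo_ge0 n : 0 <= M * rho ^+ n by rewrite mulr_ge0 ?exprn_ge0.
suff dominated f : (forall n, f n ^+ 2 <= q (u n)) -> cvgn (series f).
  by split; apply: dominated => n; [exact: Re_sqr_le_sqmod | exact: Im_sqr_le_sqmod].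
move=> f_le; apply: normed_cvg.
apply: (@series_le_cvg _ _ (geometric M rho)) => [n|n|n|].
- exact: normr_ge0.
- exact: geometric_ge0.
- rewrite /geometric /= -(ler_pXn2r (isT : (0 < 2)%N)) ?nnegrE //.
  by rewrite real_normK ?num_real // (le_trans (f_le n)).
- by apply: is_cvg_geometric_series; rewrite ger0_norm.
Qed.

Lemma limn_seriesS f : cvgn (series f) ->
  limn (series f) = f 0%N + limn (series (fun n => f n.+1)).
Proof.
move=> cvg_f.
have shiftE : series (fun n => f n.+1) = fun n => series f n.+1 - f 0%N.
  by apply/funext => n; rewrite /series /= big_nat_recl // addrAC subrr add0r.
have : series (fun n => f n.+1) @ \oo --> limn (series f) - f 0%N.
  by rewrite shiftE; apply: cvgB; [rewrite cvg_shiftS | exact: cvg_cst].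
by move/(cvg_lim (@Rhausdorff R)) => ->; rewrite (addrC (f 0%N)) subrK.
Qed.

Lemma cseries_limS u : cseries_cvg u ->
  cseries_lim u = u 0%N + cseries_lim (fun n => u n.+1).
Proof.
case=> cvg_re cvg_im.
by rewrite /cseries_lim (limn_seriesS cvg_re) (limn_seriesS cvg_im); case: (u 0%N).
Qed.

Lemma cseries_limZ u (a : R[i]) : cseries_cvg u ->
  cseries_lim (fun n => a * u n) = a * cseries_lim u.
Proof.
case=> cvg_re cvg_im; rewrite /cseries_lim.
have re_cvg : series (fun n => complex.Re (a * u n)) @ \oo -->
    complex.Re a * limn (series (fun n => complex.Re (u n)))
    - complex.Im a * limn (series (fun n => complex.Im (u n))).
  have -> : series (fun n => complex.Re (a * u n)) = fun N =>
      complex.Re a * series (fun n => complex.Re (u n)) N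
      - complex.Im a * series (fun n => complex.Im (u n)) N.
    apply/funext => N; rewrite /series /= !mulr_sumr -sumrB.
    by apply: eq_bigr => n _; rewrite ReM.
  by apply: cvgB; apply: cvgMl_tmp.
have im_cvg : series (fun n => complex.Im (a * u n)) @ \oo -->
    complex.Re a * limn (series (fun n => complex.Im (u n)))
    + complex.Im a * limn (series (fun n => complex.Re (u n))).
  have -> : series (fun n => complex.Im (a * u n)) = fun N =>
      complex.Re a * series (fun n => complex.Im (u n)) N
      + complex.Im a * series (fun n => complex.Re (u n)) N.
    apply/funext => N; rewrite /series /= !mulr_sumr -big_split /=.
    by apply: eq_bigr => n _; case: (a); case: (u n).
  by apply: cvgD; apply: cvgMl_tmp.
by rewrite (cvg_lim (@Rhausdorff R) re_cvg) (cvg_lim (@Rhausdorff R) im_cvg); case: (a).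
Qed.

Lemma sqmod_series_cvg u : cseries_cvg u ->
  q (series u N) @[N --> \oo] --> q (cseries_lim u).
Proof.
case=> cvg_re cvg_im; rewrite /sqmod /= !expr2.
have partE N : series u N = series (fun n => complex.Re (u n)) N +i*
                            series (fun n => complex.Im (u n)) N.
  by rewrite /series /= -Re_sum -Im_sum; case: (\sum_(0 <= k < N) u k).
under eq_fun do rewrite partE /=.
by apply: cvgD; apply: cvgM.
Qed.

End ComplexSeries.

Section L2Facts.
Variables (R : realType) (G : groupType).
Local Notation q := (@sqmod R).
Implicit Types (x y : G -> R[i]) (s : seq G).

Lemma esum_sqmod_ge0 x : (0 <= \esum_(g in [set: G]) (q (x g))%:E)%E.
Proof. by apply: esum_ge0 => g _; rewrite lee_fin sqmod_ge0. Qed.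

Lemma in_l2E x : in_l2 x <-> (\esum_(g in [set: G]) (q (x g))%:E < +oo)%E.
Proof.
rewrite /in_l2 /summable (eq_esum (fun g _ => gee0_abs _)) //.
by move=> g _; rewrite lee_fin sqmod_ge0.
Qed.

Lemma sum_sqmod_le_l2norm2 x s : in_l2 x -> uniq s ->
  \sum_(k <- s) q (x k) <= l2norm2 x.
Proof.
move=> /in_l2E x_l2 s_uniq.
have x_fin : \esum_(g in [set: G]) (q (x g))%:E \is a fin_num.
  by rewrite ge0_fin_numE ?esum_sqmod_ge0.
rewrite -lee_fin /l2norm2 fineK // -sumEFin; apply: esum_ge.
exists [set` s]; first by split; [exact: finite_seq | by []].
by rewrite -fsbig_seq.
Qed.

Lemma l2_of_bounded_sums x (M : R) :
  (forall s, uniq s -> \sum_(k <- s) q (x k) <= M) ->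
  in_l2 x /\ l2norm2 x <= M.
Proof.
move=> sum_le.
have esum_le : (\esum_(g in [set: G]) (q (x g))%:E <= M%:E)%E.
  apply: ge_ereal_sup => _ [A [A_fin _] <-].
  by rewrite fsbig_finite // sumEFin lee_fin sum_le // finmap.fset_uniq.
split; first by apply/in_l2E; exact: le_lt_trans esum_le (ltry M).
move: (esum_sqmod_ge0 x) esum_le; rewrite /l2norm2.
by case: (\esum_(g in _) _)%E => [r| |] //=; rewrite lee_fin.
Qed.

Lemma sqmod_le_l2norm2 x k : in_l2 x -> q (x k) <= l2norm2 x.
Proof.
by move=> x_l2; have := @sum_sqmod_le_l2norm2 x [:: k] x_l2 isT; rewrite big_seq1.
Qed.

Lemma l2norm2_ge0 x : in_l2 x -> 0 <= l2norm2 x.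
Proof.
by move=> x_l2; have := @sum_sqmod_le_l2norm2 x [::] x_l2 isT; rewrite big_nil.
Qed.

Lemma sum_sqmod_rtrans_le x h s : in_l2 x -> uniq s ->
  \sum_(k <- s) q (x (k * h)%g) <= l2norm2 x.
Proof.
move=> x_l2 s_uniq; rewrite -(big_map (fun k => (k * h)%g) xpredT (fun k => q (x k))).
by apply: sum_sqmod_le_l2norm2; rewrite // map_inj_uniq //; exact: mulIg.
Qed.

Lemma in_l2_rtrans x h : in_l2 x -> in_l2 (fun k => x (k * h)%g).
Proof.
move=> x_l2; apply: (proj1 (@l2_of_bounded_sums _ (l2norm2 x) _)) => s.
exact: sum_sqmod_rtrans_le.
Qed.

Lemma in_l2Z (c : R[i]) x : in_l2 x -> in_l2 (fun k => c * x k).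
Proof.
move=> x_l2; apply: (proj1 (@l2_of_bounded_sums _ (q c * l2norm2 x) _)) => s s_uniq.
under eq_bigr do rewrite sqmodM.
rewrite -mulr_sumr; apply: ler_wpM2l; [exact: sqmod_ge0 | exact: sum_sqmod_le_l2norm2].
Qed.

Lemma in_l2B x y : in_l2 x -> in_l2 y -> in_l2 (fun k => x k - y k).
Proof.
move=> x_l2 y_l2.
apply: (proj1 (@l2_of_bounded_sums _ (2 * l2norm2 x + 2 * l2norm2 y) _)) => s s_uniq.
apply: (@le_trans _ _ (\sum_(k <- s) (2 * q (x k) + 2 * q (y k)))).
  apply: ler_sum => k _; rewrite -(sqmodN (y k)).
  by have := @sqmodD_le R (x k) (- y k) 1 1 ltr01 ltr01; rewrite !divr1; lra.
rewrite big_split -!mulr_sumr /=.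
by apply: lerD; apply: ler_wpM2l => //; exact: sum_sqmod_le_l2norm2.
Qed.

Lemma l2_eq0_of_orbit_contraction x v (r : R) : in_l2 x -> 0 <= r < 1 ->
  (forall k, q (x k) <= r * q (x (k * v)%g)) -> x = fun=> 0.
Proof.
move=> x_l2 /andP[r_ge0 r_lt1] x_le; apply/funext => k.
have iter_le n : q (x k) <= r ^+ n * l2norm2 x.
  suff orbit_le m : q (x k) <= r ^+ m * q (x (k * v ^+ m)%g).
    apply: le_trans (orbit_le n) _.
    by apply: ler_wpM2l; [rewrite exprn_ge0 | exact: sqmod_le_l2norm2].
  elim: m => [|m IHm]; first by rewrite expr0 mul1r expg0 mulg1.
  apply: le_trans IHm _; rewrite exprSr -mulrA.
  by apply: ler_wpM2l; [rewrite exprn_ge0 | rewrite expgSr mulgA x_le].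
have geo_cvg : r ^+ n * l2norm2 x @[n --> \oo] --> 0.
  rewrite -(mul0r (l2norm2 x)); apply: cvgMr_tmp.
  by apply: cvg_expr; rewrite ger0_norm.
apply/eqP; rewrite -sqmod_eq0 eq_le sqmod_ge0 andbT.
rewrite -(cvg_lim (@Rhausdorff R) geo_cvg); apply: limr_ge.
  exact: cvgP geo_cvg.
exact: nearW.
Qed.

End L2Facts.

Section NeumannSeries.
Variables (R : realType) (G : groupType).
Local Notation q := (@sqmod R).
Variables (c : R[i]) (v : G) (w : G -> R[i]) (rho : R).
Hypotheses (w_l2 : in_l2 w) (rho_gt0 : 0 < rho) (rho_lt1 : rho < 1)
  (c_le : q c <= rho ^+ 2).

Let t (k : G) (n : nat) : R[i] := c ^+ n * w (k * v ^+ n)%g.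

(* [(1 - c R_v)^-1 w], where [R_v x := fun k => x (k * v)]. *)
Definition neumann (k : G) : R[i] := cseries_lim (t k).

Lemma neumann_term_le k n : q (t k n) <= rho ^+ n * (rho ^+ n * q (w (k * v ^+ n)%g)).
Proof.
rewrite /t sqmodM sqmodX mulrA -exprMn -expr2.
apply: ler_wpM2r; first exact: sqmod_ge0.
by apply: lerXn2r; rewrite // nnegrE ?sqmod_ge0 ?exprn_ge0 ?ltW.
Qed.

Lemma neumann_cvg k : cseries_cvg (t k).
Proof.
apply: (cseries_cvg_geometric (M := Num.sqrt (l2norm2 w)) (rho := rho)).
- exact: sqrtr_ge0.
- by rewrite ltW.
move=> n; rewrite exprMn sqr_sqrtr ?l2norm2_ge0 // mulrC.
apply: le_trans (neumann_term_le k n) _; rewrite mulrA -expr2.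
by apply: ler_wpM2l; [exact: sqr_ge0 | exact: sqmod_le_l2norm2].
Qed.

Lemma neumannE k : neumann k = w k + c * neumann (k * v)%g.
Proof.
rewrite /neumann (cseries_limS (neumann_cvg k)) /t expr0 mul1r expg0 mulg1.
rewrite -cseries_limZ; last exact: neumann_cvg.
by congr (_ + cseries_lim _); apply/funext => n; rewrite exprS expgS mulgA mulrA.
Qed.

Let K := (1 - rho)^-1.

Lemma sum_geometric_le N : \sum_(0 <= n < N) rho ^+ n <= K.
Proof.
have -> : \sum_(0 <= n < N) rho ^+ n = series (geometric 1 rho) N.
  by apply: eq_bigr => n _; rewrite /geometric /= mul1r.
by rewrite /K -[X in _ <= X]mul1r geometric_le_lim ?ler01 ?ger0_norm ?ltW.
Qed.

Lemma neumann_partial_le s N : uniq s ->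
  \sum_(k <- s) q (series (t k) N) <= K * (K * l2norm2 w).
Proof.
move=> s_uniq.
have K_ge0 : 0 <= K by rewrite invr_ge0 subr_ge0 ltW.
have term_le k : q (series (t k) N)
    <= K * \sum_(0 <= n < N) rho ^+ n * q (w (k * v ^+ n)%g).
  apply: le_trans (sqmod_sum_le (t k) N (fun n => exprn_gt0 n rho_gt0)) _.
  apply: ler_pM.
  - by apply: sumr_ge0 => n _; rewrite exprn_ge0 ?ltW.
  - by apply: sumr_ge0 => n _; rewrite divr_ge0 ?sqmod_ge0 ?exprn_ge0 ?ltW.
  - exact: sum_geometric_le.
  - apply: ler_sum => n _; rewrite ler_pdivrMr ?exprn_gt0 // mulrAC -mulrA.
    exact: neumann_term_le.
apply: le_trans (ler_sum _ (fun k _ => term_le k)) _.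
rewrite -mulr_sumr; apply: ler_wpM2l => //; rewrite exchange_big /=.
apply: (@le_trans _ _ (\sum_(0 <= n < N) rho ^+ n * l2norm2 w)).
  apply: ler_sum => n _; rewrite -mulr_sumr.
  by apply: ler_wpM2l; [rewrite exprn_ge0 ?ltW | exact: sum_sqmod_rtrans_le].
rewrite -mulr_suml; apply: ler_wpM2r; [exact: l2norm2_ge0 | exact: sum_geometric_le].
Qed.

Lemma neumann_l2 : in_l2 neumann.
Proof.
apply: (proj1 (@l2_of_bounded_sums _ _ _ (K * (K * l2norm2 w)) _)) => s s_uniq.
have sum_cvg : \sum_(k <- s) q (series (t k) N) @[N --> \oo]
    --> \sum_(k <- s) q (neumann k).
  apply: cvg_big => // [|k _]; first exact: add_continuous.
  exact: sqmod_series_cvg (neumann_cvg k).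
rewrite -(cvg_lim (@Rhausdorff R) sum_cvg); apply: limr_le.
  exact: cvgP sum_cvg.
by apply: nearW => N; exact: neumann_partial_le.
Qed.

End NeumannSeries.

Section RightConvolution.
Variables (R : realType) (G : groupType).
Local Notation q := (@sqmod R).
Variables (a b : R[i]) (g1 g2 : G).
Implicit Types x y : G -> R[i].

Definition rconv2 x : G -> R[i] := fun h => a * x (h * g1^-1)%g + b * x (h * g2^-1)%g.

Lemma eq_mulgV_mulVg (g h k : G) : ((h * k^-1)%g == g) = ((g^-1 * h)%g == k).
Proof.
by apply/eqP/eqP => [<-|<-]; rewrite invgM invgK ?mulgVK ?mulVKg.
Qed.

Lemma rconv2_delta g :
  rconv2 (delta R g) = lambda g (fun h => a * delta R g1 h + b * delta R g2 h).
Proof. by apply/funext => h; rewrite /rconv2 /lambda /delta !eq_mulgV_mulVg. Qed.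

Lemma rconv2_linear (c : R[i]) x y :
  rconv2 (fun h => c * x h + y h) = fun h => c * rconv2 x h + rconv2 y h.
Proof. by apply/funext => h; rewrite /rconv2; ring. Qed.

Lemma rconv2_l2 x : in_l2 x ->
  in_l2 (rconv2 x) /\ l2norm2 (rconv2 x) <= (2 * q a + 2 * q b) * l2norm2 x.
Proof.
move=> x_l2; apply: l2_of_bounded_sums => s s_uniq.
apply: (@le_trans _ _ (\sum_(k <- s)
    (2 * q a * q (x (k * g1^-1)%g) + 2 * q b * q (x (k * g2^-1)%g)))).
  apply: ler_sum => k _; rewrite -!mulrA -!sqmodM.
  by have := sqmodD_le (a * x (k * g1^-1)%g) (b * x (k * g2^-1)%g) ltr01 ltr01;
    rewrite !divr1; lra.
rewrite big_split -!mulr_sumr /= (mulrDl (2 * q a)).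
by apply: lerD; apply: ler_wpM2l; rewrite ?mulr_ge0 ?sqmod_ge0 ?sum_sqmod_rtrans_le.
Qed.

Hypothesis lt_ba : q b < q a.

Lemma rconv2_inj x y : in_l2 x -> in_l2 y -> rconv2 x = rconv2 y -> x = y.
Proof.
move=> x_l2 y_l2 eq_xy.
have qa_gt0 : 0 < q a by apply: le_lt_trans lt_ba; exact: sqmod_ge0.
suff diff0 : (fun k => x k - y k) = fun=> 0.
  by apply/funext => k; apply/subr0_eq; exact: (congr1 (@^~ k) diff0).
apply: (l2_eq0_of_orbit_contraction (v := (g1 * g2^-1)%g) (r := q b / q a)).
- exact: in_l2B.
- by rewrite divr_ge0 ?sqmod_ge0 ?ltW //= ltr_pdivrMr // mul1r.
move=> k; have := congr1 (fun f => f (k * g1)%g) eq_xy.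
rewrite /rconv2 mulgK -mulgA => eq_k.
have sum0 : a * (x k - y k) + b * (x (k * (g1 / g2))%g - y (k * (g1 / g2))%g) = 0.
  by rewrite -(subrr (a * y k + b * y (k * (g1 / g2))%g)) -{1}eq_k; ring.
move/eqP: sum0; rewrite addr_eq0 => /eqP/(congr1 q); rewrite sqmodN !sqmodM => eq_q.
by rewrite mulrAC -eq_q mulrAC divff ?mul1r ?lexx ?gt_eqF.
Qed.

Lemma rconv2_surj y : in_l2 y -> exists2 x, in_l2 x & rconv2 x = y.
Proof.
move=> y_l2.
have qa_gt0 : 0 < q a by apply: le_lt_trans lt_ba; exact: sqmod_ge0.
have a_neq0 : a != 0 by rewrite -sqmod_eq0 gt_eqF.
pose c := - b / a; pose rho := (1 + q c) / 2.
have qc_lt1 : q c < 1 by rewrite sqmodM sqmodN sqmodV ltr_pdivrMr // mul1r.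
have rho_gt0 : 0 < rho by rewrite divr_gt0 // ltr_wpDr ?sqmod_ge0.
have rho_lt1 : rho < 1 by rewrite ltr_pdivrMr // mul1r; lra.
have qc_le : q c <= rho ^+ 2.
  rewrite -subr_ge0 (_ : _ - _ = ((1 - q c) / 2) ^+ 2); first exact: sqr_ge0.
  by rewrite /rho; field.
pose w k := a^-1 * y (k * g1)%g.
have w_l2 : in_l2 w by apply: in_l2Z; exact: in_l2_rtrans.
exists (neumann c (g1 * g2^-1)%g w); first exact: neumann_l2 w_l2 rho_gt0 rho_lt1 qc_le.
apply/funext => h; rewrite /rconv2 (neumannE _ w_l2 rho_gt0 rho_lt1 qc_le).
rewrite /w mulgVK mulgA mulgVK /c.
by field.
Qed.

Lemma riesz_basis_rconv2 :
  riesz_basis (fun g => lambda g (fun h => a * delta R g1 h + b * delta R g2 h)).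
Proof.
exists rconv2; split.
- by move=> x /rconv2_l2 [].
- by move=> c x y _ _; exact: rconv2_linear.
- by exists (2 * q a + 2 * q b) => x /rconv2_l2 [].
- by split; [exact: rconv2_inj | exact: rconv2_surj].
- exact: rconv2_delta.
Qed.

End RightConvolution.

Theorem proposition7p5 (R : realType) (G : groupType)
  (Gcount : countable [set: G])
  (g1 g2 : G) (a b : R[i]) :
  g1 != g2 -> a != 0 -> b != 0 -> `|a| != `|b| ->
  riesz_basis (fun g : G =>
    lambda g (fun h : G => a * delta R g1 h + b * delta R g2 h)).
Proof.
move=> _ _ _ neq_ab.
have neq_q : sqmod a != sqmod b.
  by apply: contraNneq neq_ab; rewrite !normc_def /sqmod => ->.
case: ltgtP neq_q => [lt_ab _ | lt_ba _ | _ //].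
- under eq_fun do under eq_fun do rewrite addrC.
  exact: riesz_basis_rconv2.
- exact: riesz_basis_rconv2.
Qed.
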